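(* Let $\Omega\subset\mathbb{R}^n$ be a non-empty, bounded, connected, open set with closure $\overline{\Omega}$. Let $J\in C(\overline{\Omega}\times\overline{\Omega})$, let $S\in C^\infty(\mathbb{R})$ have bounded $k$th derivative for every $k\in\{0,1,2,\dots\}$, and let $\tau\in C(\overline{\Omega}\times\overline{\Omega})$ be non-negative and not identically zero. Put $h:=\sup_{\overline{\Omega}\times\overline{\Omega}}\tau$, $Y:=C(\overline{\Omega})$ with supremum norm and $X:=C([-h,0];Y)$ with supremum norm. Let $\alpha>0$ and define $F:X\to Y$ by $$F(\phi):=-\alpha\phi(0)+G(\phi),\qquad G(\phi)(\mathbf{r})=\int_{\overline{\Omega}}J(\mathbf{r},\mathbf{r}')S\big(\phi(-\tau(\mathbf{r},\mathbf{r}'),\mathbf{r}')\big)\,d\mathbf{r}'.$$ Then $F$ is globally Lipschitz continuous.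
   Context: For $\phi\in X$ one writes $\phi(t,\mathbf{r}):=\phi(t)(\mathbf{r})$. $G$ maps $X$ into $Y$. *)

From HB Require Import structures.
From mathcomp Require Import all_boot all_order all_algebra.
From mathcomp Require Import all_classical all_reals all_analysis.
Set Implicit Arguments. Unset Strict Implicit. Unset Printing Implicit Defensive.
Import Order.TTheory GRing.Theory Num.Theory.
Import numFieldNormedType.Exports.
Local Open Scope classical_set_scope.
Local Open Scope ring_scope.

(* Points of R^n are row vectors 'rV[R]_n (product topology / max norm). *)

(* Lebesgue integral on R^n of a function, computed as the iterated
   one-dimensional Lebesgue integral (Fubini): for n = 0 the space is a point
   (mass 1); for n.+1 integrate the first coordinate last. *)
Fixpoint iint (R : realType) (n : nat) : ('rV[R]_n -> R) -> R :=
  match n return ('rV[R]_n -> R) -> R with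
  | 0 => fun f => f 0
  | n'.+1 => fun f =>
      Rintegral (@lebesgue_measure R) setT
        (fun x : R => iint (fun v : 'rV[R]_n' => f (row_mx (x%:M : 'M[R]_1) v)))
  end.

Definition int_over (R : realType) (n : nat) (K : set 'rV[R]_n)
    (f : 'rV[R]_n -> R) : R :=
  iint (fun v => \1_K v * f v).

Definition smooth (R : realType) (S : R -> R) : Prop :=
  forall k x, derivable (derive1n k S) x 1.

Definition all_derivs_bounded (R : realType) (S : R -> R) : Prop :=
  forall k : nat, exists M : R, forall x : R, `|derive1n k S x| <= M.

Definition inY (R : realType) (n : nat) (K : set 'rV[R]_n)
    (y : 'rV[R]_n -> R) : Prop :=
  {within K, continuous y}.

Definition normY (R : realType) (n : nat) (K : set 'rV[R]_n)
    (y : 'rV[R]_n -> R) : R :=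
  sup [set `|y r| | r in K].

Definition inX (R : realType) (n : nat) (K : set 'rV[R]_n) (h : R)
    (phi : R -> 'rV[R]_n -> R) : Prop :=
  (forall t, t \in `[-h, 0] -> inY K (phi t)) /\
  (forall t0, t0 \in `[-h, 0] -> forall e : R, 0 < e ->
     exists2 d : R, 0 < d & forall t, t \in `[-h, 0] -> `|t - t0| < d ->
       normY K (fun r => phi t r - phi t0 r) < e).

Definition normX (R : realType) (n : nat) (K : set 'rV[R]_n) (h : R)
    (phi : R -> 'rV[R]_n -> R) : R :=
  sup [set normY K (phi t) | t in [set t | t \in `[-h, 0]]].

Definition Gop (R : realType) (n : nat) (K : set 'rV[R]_n)
    (J tau : 'rV[R]_n -> 'rV[R]_n -> R) (S : R -> R)
    (phi : R -> 'rV[R]_n -> R) : 'rV[R]_n -> R :=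
  fun r => int_over K (fun r' => J r r' * S (phi (- tau r r') r')).

Definition Fop (R : realType) (n : nat) (K : set 'rV[R]_n)
    (J tau : 'rV[R]_n -> 'rV[R]_n -> R) (S : R -> R) (alpha : R)
    (phi : R -> 'rV[R]_n -> R) : 'rV[R]_n -> R :=
  fun r => - alpha * phi 0 r + Gop K J tau S phi r.

(* F is -alpha times evaluation at 0, which is 1-Lipschitz from X to Y, plus G.
   The closure K of Omega is compact, so J is bounded on K x K, S is bounded and
   Lipschitz (its derivative is bounded), and 0 <= tau <= h; hence for each r the
   integrands of G(phi)(r) and G(psi)(r) differ on K by at most
   sup|J| * sup|S'| * |phi - psi|_X.  The integral over K is an iterated
   one-dimensional Lebesgue integral over a cube [-c, c]^n containing K, and each
   one-dimensional integration turns a uniform bound on the difference of bounded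
   integrands supported in [-c, c] into a bound multiplied by 4c.  This last
   estimate is proved from the definition of the integral of a nonnegative
   function as a supremum over simple functions below it, so no measurability of
   the iterated integrands is needed. *)

From HB Require Import structures.
From mathcomp Require Import all_boot all_order all_algebra.
From mathcomp Require Import all_classical all_reals all_analysis.
From mathcomp Require Import ring lra measurable_realfun.
Import Order.TTheory GRing.Theory Num.Theory.
Import numFieldNormedType.Exports.
Local Open Scope classical_set_scope.
Local Open Scope ring_scope.
Set Implicit Arguments. Unset Strict Implicit.

Section OneDimensional.
Import HBNNSimple.
Variable R : realType.
Local Notation mu := (@lebesgue_measure R).

Lemma maxr0_le_add_dist (p q : R) : Num.max p 0 <= Num.max q 0 + `|p - q|.
Proof.
have := ler_norm (p - q); have := normr_ge0 (p - q).
have : q <= Num.max q 0 by rewrite le_max lexx.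
have : 0 <= Num.max q 0 by rewrite le_max lexx orbT.
by rewrite ge_max; lra.
Qed.

Lemma ge0_le_integralT (f g : R -> \bar R) : (forall x, 0 <= f x)%E ->
  (forall x, f x <= g x)%E -> (\int[mu]_x f x <= \int[mu]_x g x)%E.
Proof.
move=> f0 fg; have g0 x : (0 <= g x)%E := le_trans (f0 x) (fg x).
rewrite !ge0_integralTE //; apply: ereal_sup_le => _ [s sf <-].
by exists s => //= x; exact: le_trans (sf x) (fg x).
Qed.

Lemma ge0_le_integralT_addr (f g : R -> \bar R) (w : R -> R) :
  (forall x, 0 <= f x)%E -> (forall x, 0 <= g x)%E -> (forall x, 0 <= w x) ->
  measurable_fun setT w -> (forall x, f x <= g x + (w x)%:E)%E ->
  (\int[mu]_x f x <= \int[mu]_x g x + \int[mu]_x (w x)%:E)%E.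
Proof.
move=> f0 g0 w0 mw fgw.
rewrite [leLHS]ge0_integralTE //; apply: ge_ereal_sup => _ [s sf <-] /=.
rewrite -integralT_nnsfun.
(* A simple function [s] below [f] satisfies [s <= (s - w)^+ + w], and the
   measurable function [(s - w)^+] lies below [g]. *)
pose k x := Num.max (s x - w x) 0.
have ms : measurable_fun setT s by exact: measurable_funPT.
have mk : measurable_fun setT k.
  by apply: measurable_maxr => //; exact: measurable_funB.
have k0 x : 0 <= k x by rewrite le_max lexx orbT.
have kg x : ((k x)%:E <= g x)%E.
  rewrite /k; case: (lerP (s x - w x) 0) => [_|sw]; first exact: g0.
  move: (g0 x) (le_trans (sf x) (fgw x)); case: (g x) => [r| |] //=.
    by rewrite !lee_fin => _; lra.
  by move=> *; rewrite leey.
apply: (@le_trans _ _ (\int[mu]_x ((k x)%:E + (w x)%:E))%E).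
  apply: ge0_le_integral => //.
  - by move=> x _; rewrite lee_fin.
  - by apply/measurable_EFinP.
  - by apply: emeasurable_funD; apply/measurable_EFinP.
  by move=> x _; rewrite -EFinD lee_fin -lerBlDr le_max lexx.
rewrite ge0_integralD //; last 4 first.
- by move=> x _; rewrite lee_fin.
- by apply/measurable_EFinP.
- by move=> x _; rewrite lee_fin.
- by apply/measurable_EFinP.
by apply: leeD2r; apply: ge0_le_integralT => x; rewrite ?lee_fin.
Qed.

Section SymmetricInterval.
Variable a : R.
Hypothesis a_ge0 : 0 <= a.
Let I : set R := [set` `[-a, a]].
Let mI : measurable I. Proof. exact: measurable_itv. Qed.

Lemma indic_sym_itv x : \1_I x = if `|x| <= a then 1 else 0 :> R.
Proof.
rewrite indicE; case: ifPn => xa.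
  by rewrite mem_set // /I /= in_itv /= -ler_norml.
by rewrite memNset //= /I /= in_itv /= -ler_norml; exact/negP.
Qed.

Lemma integral_cst_indic_sym (c : R) : 0 <= c ->
  (\int[mu]_x (c * \1_I x)%:E)%E = (c * (2 * a))%:E.
Proof.
move=> c0.
rewrite (@integralZl_indic _ _ _ mu setT measurableT (fun _ => I) c) //; last first.
  by move=> /(le_lt_trans c0); rewrite ltxx.
rewrite integral_indic // setIT.
have muI : mu I = (2 * a)%:E.
  rewrite /I lebesgue_measure_itv /= lte_fin.
  case: ltP => aa; first by rewrite -EFinB; congr EFin; lra.
  have a0 : a = 0 by apply/eqP; rewrite eq_le a_ge0 andbT (le_trans aa) // oppr_le0.
  by rewrite a0 mulr0.
by rewrite EFinM; congr (_ * _)%E; exact: muI.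
Qed.

Lemma ge0_integral_fin_num_le_indic (v : R -> R) (M : R) : 0 <= M ->
  (forall x, 0 <= v x) -> (forall x, v x <= M * \1_I x) ->
  (\int[mu]_x (v x)%:E)%E \is a fin_num.
Proof.
move=> M0 v0 vM.
rewrite ge0_fin_numE; last by apply: integral_ge0 => x _; rewrite lee_fin.
apply: le_lt_trans (_ : (\int[mu]_x (M * \1_I x)%:E < +oo)%E).
  by apply: ge0_le_integralT => x; rewrite lee_fin.
by rewrite integral_cst_indic_sym // ltry.
Qed.

Lemma Rintegral_posneg (u : R -> R) (M : R) :
  (forall x, a < `|x| -> u x = 0) -> (forall x, `|u x| <= M) ->
  [/\ (\int[mu]_x (Num.max (u x) 0)%:E)%E \is a fin_num,
      (\int[mu]_x (Num.max (- u x) 0)%:E)%E \is a fin_num &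
      Rintegral mu setT u = fine (\int[mu]_x (Num.max (u x) 0)%:E)%E
                            - fine (\int[mu]_x (Num.max (- u x) 0)%:E)%E].
Proof.
move=> u_supp uM; have M0 : 0 <= M := le_trans (normr_ge0 _) (uM 0).
have part_fin (s : R -> R) : (forall x, a < `|x| -> s x = 0) ->
    (forall x, `|s x| <= M) -> (\int[mu]_x (Num.max (s x) 0)%:E)%E \is a fin_num.
  move=> s_supp sM; apply: (@ge0_integral_fin_num_le_indic _ M M0) => x.
    by rewrite le_max lexx orbT.
  rewrite indic_sym_itv; case: ifPn => xa.
    by rewrite mulr1 ge_max M0 andbT; exact: le_trans (ler_norm _) (sM x).
  by rewrite s_supp ?mulr0 ?maxxx // ltNge.
have pos_fin := part_fin u u_supp uM.
have neg_fin : (\int[mu]_x (Num.max (- u x) 0)%:E)%E \is a fin_num.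
  by apply: part_fin => [x /u_supp ->|x]; rewrite ?normrN ?oppr0.
split => //; rewrite /Rintegral integralE -fineB //.
by congr (fine (_ - _)); apply: eq_integral => x _;
  rewrite ?funeposE ?funenegE EFin_max ?EFinN.
Qed.

Lemma integral_maxr0_le (D : R) (v1 v2 : R -> R) :
  (forall x, a < `|x| -> v1 x = v2 x) -> (forall x, `|v1 x - v2 x| <= D) ->
  (\int[mu]_x (Num.max (v1 x) 0)%:E <=
   \int[mu]_x (Num.max (v2 x) 0)%:E + (D * (2 * a))%:E)%E.
Proof.
move=> v_supp vD; have D0 : 0 <= D := le_trans (normr_ge0 _) (vD 0).
rewrite -integral_cst_indic_sym //.
apply: ge0_le_integralT_addr => [x|x|x||x].
- by rewrite lee_fin le_max lexx orbT.
- by rewrite lee_fin le_max lexx orbT.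
- by rewrite indic_sym_itv; case: ifP; rewrite ?mulr1 ?mulr0.
- by apply: measurable_funM => //; exact: measurable_indic.
rewrite -EFinD lee_fin indic_sym_itv; case: ifPn => xa.
  by rewrite mulr1; apply: le_trans (maxr0_le_add_dist _ (v2 x)) _; rewrite lerD2l.
by rewrite v_supp ?mulr0 ?addr0 // ltNge.
Qed.

(* Positive and negative parts each contribute [2 a D]. *)
Lemma Rintegral_dist_le (D M : R) (u1 u2 : R -> R) :
  (forall x, a < `|x| -> u1 x = 0 /\ u2 x = 0) ->
  (forall x, `|u1 x| <= M) -> (forall x, `|u2 x| <= M) ->
  (forall x, `|u1 x - u2 x| <= D) ->
  `|Rintegral mu setT u1 - Rintegral mu setT u2| <= 4 * a * D.
Proof.
move=> u_supp u1M u2M uD.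
have [p1_fin n1_fin ->] := Rintegral_posneg (fun x xa => (u_supp x xa).1) u1M.
have [p2_fin n2_fin ->] := Rintegral_posneg (fun x xa => (u_supp x xa).2) u2M.
have u_eq x : a < `|x| -> u1 x = u2 x by move=> /u_supp [-> ->].
have nu_eq x : a < `|x| -> - u1 x = - u2 x by move=> /u_eq ->.
have uD' x : `|u2 x - u1 x| <= D by rewrite distrC.
have nuD x : `|- u1 x - - u2 x| <= D by rewrite -opprD normrN.
have nuD' x : `|- u2 x - - u1 x| <= D by rewrite -opprD normrN.
have := integral_maxr0_le u_eq uD.
have := integral_maxr0_le (fun x xa => esym (u_eq x xa)) uD'.
have := integral_maxr0_le (v1 := fun x => - u1 x) nu_eq nuD.
have := integral_maxr0_le (v1 := fun x => - u2 x) (fun x xa => esym (nu_eq x xa)) nuD'.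
rewrite -(fineK p1_fin) -(fineK p2_fin) -(fineK n1_fin) -(fineK n2_fin) -!EFinD !lee_fin.
by rewrite ler_norml; lra.
Qed.

End SymmetricInterval.
End OneDimensional.

Section IteratedIntegral.
Variable R : realType.

Definition in_cube (c : R) n (v : 'rV[R]_n) := forall i, `|v ord0 i| <= c.

Lemma iint0 n : iint (fun _ : 'rV[R]_n => 0) = 0.
Proof.
elim: n => [//|n IH] /=; rewrite IH /Rintegral.
by rewrite (_ : (fun _ => _) = cst 0%E) ?integral0.
Qed.

Lemma row_mx_scalar_l n (x : R) (v : 'rV[R]_n) :
  row_mx (x%:M : 'M[R]_1) v ord0 (lshift n ord0) = x.
Proof. by rewrite row_mxEl mxE eqxx mulr1n. Qed.

Lemma row_mx_scalar_r n (x : R) (v : 'rV[R]_n) i :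
  row_mx (x%:M : 'M[R]_1) v ord0 (rshift 1 i) = v ord0 i.
Proof. by rewrite row_mxEr. Qed.

Lemma iint_dist_le n (c D M : R) (f1 f2 : 'rV[R]_n -> R) : 0 <= c ->
  (forall v, ~ in_cube c v -> f1 v = 0 /\ f2 v = 0) ->
  (forall v, `|f1 v| <= M) -> (forall v, `|f2 v| <= M) ->
  (forall v, `|f1 v - f2 v| <= D) ->
  `|iint f1 - iint f2| <= (4 * c) ^+ n * D.
Proof.
elim: n D M f1 f2 => [|n IH] D M f1 f2 c0 f_supp f1M f2M fD /=.
  by rewrite expr0 mul1r.
have M0 : 0 <= M := le_trans (normr_ge0 _) (f1M 0).
pose sec (f : 'rV[R]_n.+1 -> R) x v := f (row_mx (x%:M : 'M[R]_1) v).
have sec_supp x v : ~ in_cube c v -> sec f1 x v = 0 /\ sec f2 x v = 0.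
  move=> vc; apply: (f_supp) => xv; apply: vc => i.
  by have := xv (rshift 1 i); rewrite row_mx_scalar_r.
have sec_supp0 x v : c < `|x| -> sec f1 x v = 0 /\ sec f2 x v = 0.
  move=> cx; apply: (f_supp) => /(_ (lshift n (ord0 : 'I_1))).
  by rewrite row_mx_scalar_l leNgt cx.
have sec_bound (f : 'rV[R]_n.+1 -> R) x : (forall v, `|f v| <= M) ->
    (forall v, ~ in_cube c v -> sec f x v = 0) ->
    `|iint (sec f x)| <= (4 * c) ^+ n * M.
  move=> fM fx; have := IH M M (sec f x) (fun _ => 0) c0.
  rewrite iint0 subr0; apply=> [v /fx -> //|v|v|v].
  - exact: fM.
  - by rewrite normr0.
  - by rewrite subr0; exact: fM.
rewrite exprS -mulrA; apply: (@Rintegral_dist_le _ c c0 _ ((4 * c) ^+ n * M)).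
- move=> x cx; rewrite -(iint0 n); split; congr iint; apply/funext => v;
    by have [] := sec_supp0 x v cx.
- by move=> x; apply: sec_bound => // v /(sec_supp x) [].
- by move=> x; apply: sec_bound => // v /(sec_supp x) [].
by move=> x; apply: IH => //; exact: sec_supp.
Qed.

Lemma int_over_dist_le n (K : set 'rV[R]_n) (c D M : R) (f1 f2 : 'rV[R]_n -> R) :
  0 <= c -> K !=set0 -> (forall v, K v -> in_cube c v) ->
  (forall v, K v -> `|f1 v| <= M /\ `|f2 v| <= M) ->
  (forall v, K v -> `|f1 v - f2 v| <= D) ->
  `|int_over K f1 - int_over K f2| <= (4 * c) ^+ n * D.
Proof.
move=> c0 [v0 Kv0] K_cube fM fD.
have M0 : 0 <= M := le_trans (normr_ge0 _) (fM v0 Kv0).1.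
have D0 : 0 <= D := le_trans (normr_ge0 _) (fD v0 Kv0).
apply: (@iint_dist_le _ _ _ M) => // v; rewrite /= indicE;
  case: (boolP (v \in K)) => [/set_mem Kv|_]; rewrite ?mul1r ?mul0r ?subrr ?normr0 //.
- by move=> vc; exfalso; exact/vc/K_cube.
- exact: (fM v Kv).1.
- exact: (fM v Kv).2.
- exact: fD.
Qed.

End IteratedIntegral.

Section Bounds.
Variable R : realType.

Lemma compact_continuous_bounded (T : topologicalType) (A : set T) (f : T -> R) :
  compact A -> {within A, continuous f} -> exists M, forall x, A x -> `|f x| <= M.
Proof.
move=> cA fc; have [M [_ HM]] := compact_bounded (continuous_compact fc cA).
by exists (M + 1) => x Ax; apply: HM; [rewrite ltrDl | exists x].
Qed.

Lemma compact_continuous_le_sup (T : topologicalType) (A : set T) (f : T -> R) x :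
  compact A -> {within A, continuous f} -> A x -> f x <= sup (f @` A).
Proof.
move=> cA fc Ax; apply: sup_upper_bound; last by exists x.
by apply: compact_has_sup; [exists (f x), x | exact: continuous_compact].
Qed.

Lemma within_continuous_eps (A : set R) (g : R -> R) :
  (forall t0, A t0 -> forall e, 0 < e -> exists2 d, 0 < d &
     forall t, A t -> `|t - t0| < d -> `|g t - g t0| < e) ->
  {within A, continuous g}.
Proof.
move=> g_eps; apply/subspace_continuousP => t0 At0; apply/cvgrPdist_lt => e e0.
have [d d0 Hd] := g_eps t0 At0 e e0.
apply/nbhs_ballP; exists d => // t; rewrite -ball_normE /= => t0t At.
by rewrite distrC; apply: Hd => //; rewrite distrC.
Qed.

Lemma closure_normr_le n (A : set 'rV[R]_n) (c : R) :
  (forall x, A x -> `|x| <= c) -> forall x, closure A x -> `|x| <= c.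
Proof.
move=> Ac x Ax; rewrite leNgt; apply/negP => cx.
have xc : 0 < `|x| - c by rewrite subr_gt0.
have [y [Ay]] := Ax _ (nbhsx_ballx x (`|x| - c) xc); rewrite -ball_normE /= => xy.
by have := Ac y Ay; have := ler_normD (x - y) y; rewrite subrK; lra.
Qed.

Lemma normr_row_coord n (v : 'rV[R]_n) i : `|v ord0 i| <= `|v|.
Proof.
rewrite [leRHS]mx_normrE.
exact: (le_bigmax _ (fun ij : 'I_1 * 'I_n => `|v ij.1 ij.2|) (ord0, i)).
Qed.

Lemma bounded_derive_lipschitz (f : R -> R) (M : R) :
  (forall x, derivable f x 1) -> (forall x, `|(f^`())%classic x| <= M) ->
  forall a b, `|f a - f b| <= M * `|a - b|.
Proof.
move=> df f'M.
have f'E x : is_derive x (1 : R) f ((f^`())%classic x).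
  by rewrite derive1E; exact: derivableP.
have lip a b : a < b -> `|f a - f b| <= M * `|a - b|.
  move=> ab; have [c _ fE] := MVT ab (fun x _ => f'E x)
    (derivable_within_continuous (fun x _ => df x)).
  by rewrite distrC fE normrM (distrC a b); apply: ler_wpM2r.
move=> a b; case: (ltgtP a b) => [ab|ba|->]; first exact: lip.
  by rewrite distrC (distrC a); exact: lip.
by rewrite !subrr !normr0 mulr0.
Qed.

End Bounds.

Section SupNorms.
Variables (R : realType) (n : nat) (K : set 'rV[R]_n).
Hypotheses (K0 : K !=set0) (cK : compact K).

Lemma normY_le (y : 'rV[R]_n -> R) (m : R) :
  (forall r, K r -> `|y r| <= m) -> normY K y <= m.
Proof.
move=> ym; have [r Kr] := K0; apply: ge_sup; first by exists `|y r|, r.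
by move=> _ [s Ks <-]; exact: ym.
Qed.

Lemma normY_ge (y : 'rV[R]_n -> R) r : inY K y -> K r -> `|y r| <= normY K y.
Proof.
move=> yY Kr; have [B yB] := compact_continuous_bounded cK yY.
apply: sup_upper_bound; last by exists r.
split; first by exists `|y r|, r.
by exists B => _ [s Ks <-]; exact: yB.
Qed.

Lemma inY_sub (y1 y2 : 'rV[R]_n -> R) :
  inY K y1 -> inY K y2 -> inY K (fun r => y1 r - y2 r).
Proof. exact: within_continuousB. Qed.

Lemma normY_dist_le (y1 y2 : 'rV[R]_n -> R) : inY K y1 -> inY K y2 ->
  `|normY K y1 - normY K y2| <= normY K (fun r => y1 r - y2 r).
Proof.
move=> y1Y y2Y; have y12Y := inY_sub y1Y y2Y; have y21Y := inY_sub y2Y y1Y.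
have le_dist (z1 z2 : 'rV[R]_n -> R) : inY K z2 -> inY K (fun r => z1 r - z2 r) ->
    normY K z1 <= normY K z2 + normY K (fun r => z1 r - z2 r).
  move=> z2Y z12Y; apply: normY_le => r Kr.
  apply: le_trans (lerD (normY_ge z2Y Kr) (normY_ge z12Y Kr)).
  by have := ler_normD (z2 r) (z1 r - z2 r); rewrite addrC subrK.
have := le_dist _ _ y2Y y12Y; have := le_dist _ _ y1Y y21Y.
have -> : normY K (fun r => y2 r - y1 r) = normY K (fun r => y1 r - y2 r).
  by congr sup; apply/funext => x; rewrite propeqE; split => -[r Kr <-];
    exists r => //; rewrite distrC.
by rewrite ler_norml; lra.
Qed.

Variable h : R.
Local Notation I := `[-h, 0].

Lemma inX_sub (phi psi : R -> 'rV[R]_n -> R) : inX K h phi -> inX K h psi ->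
  inX K h (fun t r => phi t r - psi t r).
Proof.
move=> [phiY phiC] [psiY psiC]; split=> [t tI|t0 t0I e e0].
  by apply: inY_sub; [exact: phiY | exact: psiY].
have e2 : 0 < e / 2 by rewrite divr_gt0.
have [d1 d10 phid] := phiC t0 t0I (e / 2) e2.
have [d2 d20 psid] := psiC t0 t0I (e / 2) e2.
exists (Num.min d1 d2) => [|t tI]; first by rewrite lt_min d10 d20.
rewrite lt_min => /andP[td1 td2].
have dphiY := inY_sub (phiY t tI) (phiY t0 t0I).
have dpsiY := inY_sub (psiY t tI) (psiY t0 t0I).
apply: le_lt_trans (_ : _ <= normY K (fun r => phi t r - phi t0 r)
                          + normY K (fun r => psi t r - psi t0 r)) _.
  apply: normY_le => r Kr; apply: le_trans (lerD (normY_ge dphiY Kr) (normY_ge dpsiY Kr)).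
  rewrite (_ : _ - _ = (phi t r - phi t0 r) - (psi t r - psi t0 r)); last by ring.
  exact: ler_normB.
by rewrite [e](splitr e) ltrD ?phid ?psid.
Qed.

Lemma normY_continuous (chi : R -> 'rV[R]_n -> R) :
  inX K h chi -> {within [set` I], continuous (fun t => normY K (chi t))}.
Proof.
move=> [chiY chiC]; apply: within_continuous_eps => t0 t0I e e0.
have [d d0 chid] := chiC t0 t0I e e0.
exists d => // t tI td.
by apply: le_lt_trans (chid t tI td); apply: normY_dist_le; [exact: chiY|exact: chiY].
Qed.

Lemma normX_ge (chi : R -> 'rV[R]_n -> R) (t : R) r : inX K h chi -> t \in I -> K r ->
  `|chi t r| <= normX K h chi.
Proof.
move=> chiX tI Kr; apply: le_trans (normY_ge (chiX.1 t tI) Kr) _.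
apply: (@compact_continuous_le_sup _ _ [set` I] (fun t => normY K (chi t))) tI.
  exact: segment_compact.
exact: normY_continuous.
Qed.

End SupNorms.

Lemma closure_bounded_compact (R : realType) n (A : set 'rV[R]_n) :
  A !=set0 -> bounded_set A ->
  compact (closure A) /\ exists2 c, 0 <= c & forall v, closure A v -> in_cube c v.
Proof.
move=> [a0 Aa0] [c [_ Ac]].
have Ac1 x : closure A x -> `|x| <= c + 1.
  by apply: closure_normr_le => y Ay; apply: Ac Ay; rewrite ltrDl.
split.
  apply: bounded_closed_compact (@closed_closure _ _); exists (c + 1).
  by split=> [|y cy x Ax]; [exact: num_real | exact: le_trans (Ac1 x Ax) (ltW cy)].
exists (c + 1); first exact: le_trans (normr_ge0 _) (Ac1 a0 (subset_closure Aa0)).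
by move=> v Av i; exact: le_trans (normr_row_coord v i) (Ac1 v Av).
Qed.

Section Operators.
Variables (R : realType) (n : nat) (K : set 'rV[R]_n).
Variables (J tau : 'rV[R]_n -> 'rV[R]_n -> R) (S : R -> R) (alpha : R).
Variables (phi psi : R -> 'rV[R]_n -> R) (r : 'rV[R]_n) (c MJ M0 M1 N : R).
Hypotheses (c_ge0 : 0 <= c) (K0 : K !=set0) (K_cube : forall v, K v -> in_cube c v).
Hypotheses (JM : forall v, K v -> `|J r v| <= MJ) (SM : forall x, `|S x| <= M0).
Hypothesis SL : forall x y, `|S x - S y| <= M1 * `|x - y|.
Hypothesis dN : forall v, K v -> `|phi (- tau r v) v - psi (- tau r v) v| <= N.

Lemma Gop_dist_le :
  `|Gop K J tau S phi r - Gop K J tau S psi r| <= (4 * c) ^+ n * (MJ * (M1 * N)).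
Proof.
have [v0 Kv0] := K0.
have MJ0 : 0 <= MJ := le_trans (normr_ge0 _) (JM Kv0).
have M10 : 0 <= M1.
  by have := le_trans (normr_ge0 _) (SL 1 0); rewrite subr0 normr1 mulr1.
apply: (@int_over_dist_le _ _ _ c _ (MJ * M0)) => //.
- by move=> v Kv; rewrite !normrM; split; apply: ler_pM => //; exact: JM.
move=> v Kv; rewrite -mulrBr normrM; apply: ler_pM => //; first exact: JM.
by apply: le_trans (SL _ _) _; apply: ler_wpM2l => //; exact: dN.
Qed.

Lemma Fop_dist_le : 0 < alpha -> `|phi 0 r - psi 0 r| <= N ->
  `|Fop K J tau S alpha phi r - Fop K J tau S alpha psi r|
    <= (alpha + (4 * c) ^+ n * (MJ * M1)) * N.
Proof.
move=> alpha_gt0 dN0; rewrite /Fop.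
rewrite (_ : _ - _ = - alpha * (phi 0 r - psi 0 r)
                     + (Gop K J tau S phi r - Gop K J tau S psi r)); last by ring.
apply: le_trans (ler_normD _ _) _.
rewrite normrM normrN (gtr0_norm alpha_gt0) mulrDl -!mulrA.
by apply: lerD; [apply: ler_wpM2l; [exact: ltW|] | exact: Gop_dist_le].
Qed.

End Operators.

Unset Implicit Arguments.

Theorem lemma2p3 (R : realType) (n : nat) (Omega : set 'rV[R]_n)
  (J : 'rV[R]_n -> 'rV[R]_n -> R) (S : R -> R)
  (tau : 'rV[R]_n -> 'rV[R]_n -> R) (alpha : R) :
  Omega !=set0 -> bounded_set Omega -> connected Omega -> open Omega ->
  {within [set p | closure Omega p.1 /\ closure Omega p.2],
     continuous (fun p : 'rV[R]_n * 'rV[R]_n => J p.1 p.2)} ->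
  smooth S -> all_derivs_bounded S ->
  {within [set p | closure Omega p.1 /\ closure Omega p.2],
     continuous (fun p : 'rV[R]_n * 'rV[R]_n => tau p.1 p.2)} ->
  (forall r r', closure Omega r -> closure Omega r' -> 0 <= tau r r') ->
  (exists r, exists2 r', closure Omega r & closure Omega r' /\ tau r r' != 0) ->
  0 < alpha ->
  let h := sup [set tau p.1 p.2 | p in
                 [set p | closure Omega p.1 /\ closure Omega p.2]] in
  exists L : R, forall phi psi : R -> 'rV[R]_n -> R,
    inX (closure Omega) h phi -> inX (closure Omega) h psi ->
    normY (closure Omega)
      (fun r => Fop (closure Omega) J tau S alpha phi r
              - Fop (closure Omega) J tau S alpha psi r)
    <= L * normX (closure Omega) h (fun t r => phi t r - psi t r).
Proof.
move=> Omega0 Ob _ _ Jc Ss Sb tauc tau_ge0 _ alpha_gt0 h.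
have [cK [c c0 K_cube]] := closure_bounded_compact Omega0 Ob.
set K := closure Omega in Jc tauc tau_ge0 h cK K_cube *.
have K0 : K !=set0 by case: Omega0 => r0 Or0; exists r0; exact: subset_closure.
have cKK : compact [set p | K p.1 /\ K p.2] := compact_setX cK cK.
have [MJ JM] := compact_continuous_bounded cKK Jc.
have tau_le_h r v : K r -> K v -> tau r v <= h.
  move=> Kr Kv.
  exact: (@compact_continuous_le_sup _ _ _ _ (r, v) cKK tauc (conj Kr Kv)).
have [M0 SM] : exists M0, forall x, `|S x| <= M0 := Sb 0%N.
have [M1 S'M] := Sb 1%N.
have SL : forall x y, `|S x - S y| <= M1 * `|x - y|.
  exact: bounded_derive_lipschitz (Ss 0%N) S'M.
exists (alpha + (4 * c) ^+ n * (MJ * M1)) => phi psi phiX psiX.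
have dN t r : t \in `[-h, 0] -> K r ->
    `|phi t r - psi t r| <= normX K h (fun t r => phi t r - psi t r).
  by move=> tI Kr; have := normX_ge K0 cK (inX_sub K0 cK phiX psiX) tI Kr.
apply: (normY_le K0) => r Kr.
have JMr v : K v -> `|J r v| <= MJ by move=> Kv; exact: (JM (r, v)).
apply: (@Fop_dist_le R n K J tau S alpha phi psi r) => //.
  move=> v Kv; apply: (dN _ _ _ Kv).
  by rewrite in_itv /= lerN2 oppr_le0 tau_ge0 ?tau_le_h.
apply: (dN _ _ _ Kr); have [r0 Kr0] := K0.
by rewrite in_itv /= lexx oppr_le0 (le_trans (tau_ge0 _ _ Kr0 Kr0)) ?tau_le_h.
Qed.
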